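(* Let $n\ge2$ and $\delta>0$, and let $\mathtt S_{n,\delta}:=\{(\mathbf a,\mathbf b)\in\mathtt S_n: a_0>\delta\}$. Then the inverse NLFT is Lipschitz continuous on $\mathtt S_{n,\delta}$ (Euclidean metrics), with a Lipschitz constant depending only on $n$ and $\delta$.
   Context: For $(\mathbf a,\mathbf b)\in\mathbb C^n\times\mathbb C^n$ let $a(z)=\sum_{k=0}^{n-1}a_kz^{-k}$, $b(z)=\sum_{k=0}^{n-1}b_kz^k$, and $a^*(z):=\overline{a(1/\overline z)}$ (similarly $b^*$). $\mathtt S_n$ is the set of $(\mathbf a,\mathbf b)$ with $a_0$ real and positive and $aa^*+bb^*=1$. The NLFT of $\boldsymbol\gamma$ supported in $\{0,\dots,n-1\}$ is $\prod_{k=0}^{n-1}\frac{1}{\sqrt{1+|\gamma_k|^2}}\begin{pmatrix}1&\gamma_kz^k\\-\overline{\gamma_k}z^{-k}&1\end{pmatrix}=\begin{pmatrix}a&b\\-b^*&a^*\end{pmatrix}$ (ordered by increasing $k$); it is a bijection from such sequences onto $\mathtt S_n$ and its inverse is the inverse NLFT. *)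

From HB Require Import structures.
From mathcomp Require Import all_boot all_order all_algebra.
From mathcomp Require Import complex.
From mathcomp Require Import reals.
Set Implicit Arguments. Unset Strict Implicit. Unset Printing Implicit Defensive.
Import Order.TTheory GRing.Theory Num.Theory.
Local Open Scope ring_scope.
Local Open Scope complex_scope.

Section NLFT.
Variable R : realType.
Local Notation C := R[i].

Definition cabs2 (z : C) : R := complex.Re z ^+ 2 + complex.Im z ^+ 2.

(* z^k times the k-th factor of the NLFT, i.e. the polynomial matrix
   [[ z^k, g z^(2k) ], [ -conj(g), z^k ]]  (without the normalising scalar) *)
Definition nlft_factor (g : C) (k : nat) : 'M[{poly C}]_2 :=
  \matrix_(i < 2, j < 2)
     (if (i == 0) && (j == 0) then 'X^k
      else if (i == 0) && (j == 1) then g *: 'X^(k.*2)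
      else if (i == 1) && (j == 0) then (- g^*)%:P
      else 'X^k).

Definition nlft_scal (g : C) : C := ((Num.sqrt (1 + cabs2 g))^-1)%:C.

(* P = z^S * (NLFT matrix), S = n(n-1)/2, product ordered by increasing k *)
Definition nlft_polymx (n : nat) (gam : 'I_n -> C) : 'M[{poly C}]_2 :=
  \prod_(k < n) ((nlft_scal (gam k))%:P *: nlft_factor (gam k) k).

Definition nlft_shift (n : nat) : nat := 'C(n, 2).

(* a(z) = sum_k a_k z^{-k}:  a_k = coefficient of z^{S-k} in P_{00} *)
Definition nlft_a (n : nat) (gam : 'I_n -> C) (k : 'I_n) : C :=
  (nlft_polymx gam 0 0)`_(nlft_shift n - k).

(* b(z) = sum_k b_k z^k:  b_k = coefficient of z^{S+k} in P_{01} *)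
Definition nlft_b (n : nat) (gam : 'I_n -> C) (k : 'I_n) : C :=
  (nlft_polymx gam 0 1)`_(nlft_shift n + k).

Definition dist_Cn (n : nat) (u v : 'I_n -> C) : R :=
  Num.sqrt (\sum_(k < n) cabs2 (u k - v k)).

Definition dist_Cn2 (n : nat) (u v u' v' : 'I_n -> C) : R :=
  Num.sqrt (\sum_(k < n) cabs2 (u k - u' k) + \sum_(k < n) cabs2 (v k - v' k)).

End NLFT.

(* Layer stripping.  Up to a power of z, the NLFT of gam is the product of the
   polynomial matrices of the factors.  The top coefficient of its (0,0) entry is
   a_0 = prod_k (1 + |gam_k|^2)^(-1/2), and the top coefficient of its (0,1) entry
   is gam_(n-1) a_0; so gam_(n-1) is a bounded Lipschitz function of the data
   (a, b) where a_0 > delta.  Multiplying by the inverse of the last factor then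
   expresses the coefficients of the shorter product polynomially in those of the
   longer one and in gam_(n-1).  All coefficients of partial products are bounded
   (by 2^m, each factor being unitary), and bounded Lipschitz functions are closed
   under sums, products, and inversion away from 0, so a descending induction on
   the length of the product gives every gam_k. *)

From HB Require Import structures.
From mathcomp Require Import all_boot all_order all_algebra.
From mathcomp Require Import complex.
From mathcomp Require Import reals.
From mathcomp Require Import ring lra zify.
Set Implicit Arguments. Unset Strict Implicit. Unset Printing Implicit Defensive.
Import Order.TTheory GRing.Theory Num.Theory.
Local Open Scope ring_scope.
Local Open Scope complex_scope.

Section NLFTLipschitz.
Variable R : realType.
Local Notation C := R[i].

Lemma cabs2_ge0 (x : C) : 0 <= cabs2 x.
Proof. by rewrite addr_ge0 ?sqr_ge0. Qed.

Lemma cabs20 : cabs2 (0 : C) = 0.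
Proof. by rewrite /cabs2 /= expr0n addr0. Qed.

Lemma cabs2M (x y : C) : cabs2 (x * y) = cabs2 x * cabs2 y.
Proof. by case: x => a b; case: y => c d; rewrite /cabs2 /=; ring. Qed.

Lemma cabs2N (x : C) : cabs2 (- x) = cabs2 x.
Proof. by case: x => a b; rewrite /cabs2 /= !sqrrN. Qed.

Lemma cabs2J (x : C) : cabs2 x^* = cabs2 x.
Proof. by case: x => a b; rewrite /cabs2 /= sqrrN. Qed.

Lemma cabs2R (r : R) : cabs2 r%:C = r ^+ 2.
Proof. by rewrite /cabs2 /= expr0n addr0. Qed.

Lemma cabs2_realB (r s : R) : cabs2 (r%:C - s%:C) = (r - s) ^+ 2.
Proof. by rewrite -rmorphB cabs2R. Qed.

Lemma mulJc (x : C) : x^* * x = (cabs2 x)%:C.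
Proof.
case: x => a b; apply/eqP; rewrite eq_complex /cabs2 /=.
by apply/andP; split; apply/eqP; ring.
Qed.

Lemma cabs2D_le (x y : C) (a b : R) :
  cabs2 x <= a -> cabs2 y <= b -> cabs2 (x + y) <= 2 * (a + b).
Proof.
move=> xa yb; apply: le_trans (_ : 2 * (cabs2 x + cabs2 y) <= _); last first.
  by rewrite ler_wpM2l // lerD.
case: x {xa} => p q; case: y {yb} => u v; rewrite /cabs2 /=.
by have := sqr_ge0 (p - u); have := sqr_ge0 (q - v); nra.
Qed.

Lemma cabs2M_le (x y : C) (a b : R) :
  cabs2 x <= a -> cabs2 y <= b -> cabs2 (x * y) <= a * b.
Proof. by move=> xa yb; rewrite cabs2M ler_pM ?cabs2_ge0. Qed.

(* Lagrange's identity for the pairs (1, h) and (x, y). *)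
Lemma cabs2_lagrange (x y h : C) :
  cabs2 (x + h * y) + cabs2 (h^* * x - y) = (1 + cabs2 h) * (cabs2 x + cabs2 y).
Proof. by case: x => a b; case: y => c d; case: h => p q; rewrite /cabs2 /=; ring. Qed.

Lemma sqr_cabs2B_le (x y : C) : (cabs2 x - cabs2 y) ^+ 2 <= cabs2 (x - y) * cabs2 (x + y).
Proof.
case: x => a b; case: y => c d; rewrite /cabs2 /=.
by have := sqr_ge0 ((a - c) * (b + d) - (b - d) * (a + c)); nra.
Qed.

Definition scal (g : C) : R := (Num.sqrt (1 + cabs2 g))^-1.

Lemma nlft_scalE (g : C) : nlft_scal g = (scal g)%:C.
Proof. by []. Qed.

Lemma scal_sqr (g : C) : scal g ^+ 2 * (1 + cabs2 g) = 1.
Proof.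
have pos : 0 < 1 + cabs2 g by rewrite ltr_wpDr ?cabs2_ge0.
by rewrite /scal exprVn sqr_sqrtr ?ltW // mulVf // gt_eqF.
Qed.

Lemma scal_gt0 (g : C) : 0 < scal g.
Proof. by rewrite invr_gt0 sqrtr_gt0 ltr_wpDr ?cabs2_ge0. Qed.

Lemma scal_le1 (g : C) : scal g <= 1.
Proof. by have := scal_sqr g; have := scal_gt0 g; have := cabs2_ge0 g; nra. Qed.

Lemma scalC_sqr (g : C) : (scal g)%:C ^+ 2 * (1 + g^* * g) = 1.
Proof. by rewrite mulJc -rmorphXn -(rmorph1 (real_complex R)) -rmorphD -rmorphM scal_sqr. Qed.

Lemma cabs2_scal_comb (g h x y : C) : cabs2 h = cabs2 g ->
  cabs2 ((scal g)%:C * (x + h * y)) <= cabs2 x + cabs2 y.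
Proof.
move=> hg; rewrite cabs2M cabs2R -[X in _ <= X]mul1r -(scal_sqr g) -mulrA -hg.
rewrite ler_wpM2l ?sqr_ge0 // -cabs2_lagrange lerDl; exact: cabs2_ge0.
Qed.

(* [t |-> (1 + t)^(-1/2)] is 1-Lipschitz on [t >= 0], and
   [|g|^2 - |g'|^2 = Re ((g - g') conj (g + g'))]. *)
Lemma scal_dist (g g' : C) : (scal g - scal g') ^+ 2 <= cabs2 (g - g') * cabs2 (g + g').
Proof.
apply: le_trans (sqr_cabs2B_le g g').
have := scal_sqr g; have := scal_sqr g'; have := scal_gt0 g; have := scal_gt0 g'.
have := scal_le1 g; have := scal_le1 g'.
set s := scal g; set s' := scal g'; set u := cabs2 g; set v := cabs2 g'.
move=> s'_le1 s_le1 s'_gt0 s_gt0 hv hu.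
have diff_sqr : (s - s') * (s + s') = s ^+ 2 * s' ^+ 2 * (v - u).
  transitivity (s ^+ 2 * (s' ^+ 2 * (1 + v)) - s' ^+ 2 * (s ^+ 2 * (1 + u))); last by ring.
  by rewrite hu hv; ring.
have small : s ^+ 2 * s' ^+ 2 <= s + s'.
  have sqr_le1 (t : R) : 0 < t -> t <= 1 -> t ^+ 2 <= t by move=> *; nra.
  have := sqr_le1 _ s_gt0 s_le1; have := sqr_le1 _ s'_gt0 s'_le1; nra.
rewrite -(@ler_pM2r _ ((s + s') ^+ 2)) ?exprn_gt0 ?addr_gt0 // -exprMn diff_sqr.
rewrite exprMn -(sqrrN (u - v)) opprB mulrC ler_wpM2l ?sqr_ge0 //.
by rewrite ler_sqr // nnegrE ?mulr_ge0 ?exprn_ge0 ?addr_ge0 ?(ltW s_gt0) ?(ltW s'_gt0).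
Qed.

Section BoundedLipschitz.
Variables (T : Type) (good : T -> Prop) (dist : T -> T -> R).
Hypothesis dist_ge0 : forall x y, 0 <= dist x y.

(* [dist] plays the role of a squared distance: the second clause is Lipschitz
   continuity on [good] with constant [sqrt K], uniformly in the index [i]. *)
Definition bdd_lip (I : Type) (f : T -> I -> C) :=
  (exists W, forall x i, good x -> cabs2 (f x i) <= W) /\
  (exists K, forall x y i, good x -> good y -> cabs2 (f x i - f y i) <= K * dist x y).

Lemma bdd_lip_ext (I : Type) (f g : T -> I -> C) :
  (forall x i, good x -> f x i = g x i) -> bdd_lip f -> bdd_lip g.
Proof.
move=> fg [[W bf] [K lf]]; split; [exists W | exists K] => x *; rewrite -!fg //.
  exact: bf.
exact: lf.
Qed.

Lemma bdd_lip_comp (I J : Type) (h : J -> I) (f : T -> I -> C) :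
  bdd_lip f -> bdd_lip (fun x j => f x (h j)).
Proof. by move=> [[W bf] [K lf]]; split; [exists W | exists K] => *; [apply: bf | apply: lf]. Qed.

Lemma bdd_lip0 (I : Type) : bdd_lip (fun _ (_ : I) => 0).
Proof. by split; [exists 0 | exists 0] => *; rewrite ?subr0 cabs20 ?mul0r. Qed.

Lemma bdd_lip_if (I : Type) (P : pred I) (f g : T -> I -> C) :
  bdd_lip f -> bdd_lip g -> bdd_lip (fun x i => if P i then f x i else g x i).
Proof.
move=> [[Wf bf] [Kf lf]] [[Wg bg] [Kg lg]]; split.
  by exists (Num.max Wf Wg) => x i gx; rewrite le_max; case: (P i); rewrite (bf, bg) ?orbT.
exists (Num.max Kf Kg) => x y i gx gy; have := dist_ge0 x y.
by case: (P i) => ?; [apply: le_trans (lf _ _ _ gx gy) _ | apply: le_trans (lg _ _ _ gx gy) _];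
  rewrite ler_wpM2r // le_max lexx ?orbT.
Qed.

Lemma bdd_lipD (I : Type) (f g : T -> I -> C) :
  bdd_lip f -> bdd_lip g -> bdd_lip (fun x i => f x i + g x i).
Proof.
move=> [[Wf bf] [Kf lf]] [[Wg bg] [Kg lg]]; split.
  by exists (2 * (Wf + Wg)) => x i gx; apply: cabs2D_le; [apply: bf | apply: bg].
exists (2 * (Kf + Kg)) => x y i gx gy.
rewrite opprD addrACA -mulrA [_ * dist x y]mulrDl.
by apply: cabs2D_le; [exact: lf | exact: lg].
Qed.

Lemma bdd_lipN (I : Type) (f : T -> I -> C) : bdd_lip f -> bdd_lip (fun x i => - f x i).
Proof.
move=> [[W bf] [K lf]]; split; [exists W | exists K] => *; rewrite -?opprD cabs2N.
  exact: bf.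
exact: lf.
Qed.

Lemma bdd_lipJ (I : Type) (f : T -> I -> C) : bdd_lip f -> bdd_lip (fun x i => (f x i)^*).
Proof.
move=> [[W bf] [K lf]]; split; [exists W | exists K] => *; rewrite -?rmorphB cabs2J.
  exact: bf.
exact: lf.
Qed.

Lemma bdd_lipM (I : Type) (f g : T -> I -> C) :
  bdd_lip f -> bdd_lip g -> bdd_lip (fun x i => f x i * g x i).
Proof.
move=> [[Wf bf] [Kf lf]] [[Wg bg] [Kg lg]]; split.
  by exists (Wf * Wg) => x i gx; apply: cabs2M_le; [apply: bf | apply: bg].
exists (2 * (Kf * Wg + Wf * Kg)) => x y i gx gy.
have -> : f x i * g x i - f y i * g y i = (f x i - f y i) * g x i + f y i * (g x i - g y i).
  by ring.
have -> : 2 * (Kf * Wg + Wf * Kg) * dist x y = 2 * (Kf * dist x y * Wg + Wf * (Kg * dist x y)).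
  by ring.
by apply: cabs2D_le; apply: cabs2M_le; auto.
Qed.

Lemma bdd_lip_inv (I : Type) (r : T -> I -> R) (e : R) : 0 < e ->
  (forall x i, good x -> e <= r x i) ->
  bdd_lip (fun x i => (r x i)%:C) -> bdd_lip (fun x i => ((r x i)^-1)%:C).
Proof.
move=> e_gt0 ge_e [_ [K lr]].
have r_gt0 x i : good x -> 0 < r x i by move=> gx; exact: lt_le_trans (ge_e _ _ gx).
have inv_le x i : good x -> (r x i)^-1 <= e^-1.
  by move=> gx; rewrite lef_pV2 ?posrE ?r_gt0 ?ge_e.
have inv_ge0 x i : good x -> 0 <= (r x i)^-1 by move=> gx; rewrite invr_ge0 ltW ?r_gt0.
split.
  exists (e^-1 ^+ 2) => x i gx.
  by rewrite cabs2R ler_sqr ?nnegrE ?inv_le ?inv_ge0 ?invr_ge0 ?(ltW e_gt0).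
exists (e^-1 ^+ 4 * K) => x y i gx gy; rewrite cabs2_realB.
have -> : (r x i)^-1 - (r y i)^-1 = ((r x i)^-1 * (r y i)^-1) * (r y i - r x i).
  by field; rewrite ?gt_eqF ?r_gt0.
have -> : e^-1 ^+ 4 * K * dist x y = (e^-1 ^+ 2) ^+ 2 * (K * dist x y) by ring.
rewrite exprMn ler_pM ?sqr_ge0 //.
  rewrite ler_sqr ?nnegrE ?mulr_ge0 ?inv_ge0 ?exprn_ge0 ?invr_ge0 ?(ltW e_gt0) //.
  by rewrite expr2 ler_pM ?inv_le ?inv_ge0.
by rewrite -sqrrN opprB -cabs2_realB lr.
Qed.

Lemma bdd_lip_scal (I : Type) (f : T -> I -> C) :
  bdd_lip f -> bdd_lip (fun x i => (scal (f x i))%:C).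
Proof.
move=> [[W bf] [K lf]]; split.
  by exists 1 => x i _; rewrite cabs2R expr2 mulr_ile1 ?scal_le1 ?(ltW (scal_gt0 _)).
exists (K * (2 * (W + W))) => x y i gx gy; rewrite cabs2_realB mulrAC.
apply: le_trans (scal_dist _ _) _; apply: ler_pM; rewrite ?cabs2_ge0 ?lf //.
by apply: cabs2D_le; apply: bf.
Qed.

Lemma bdd_lip_finite (f : T -> nat -> C) (n : nat) :
  (forall k, (k < n)%N -> bdd_lip (fun x (_ : nat) => f x k)) ->
  bdd_lip (fun x k => if (k < n)%N then f x k else 0).
Proof.
elim: n => [|n IHn] lip_f.
  by apply: bdd_lip_ext (bdd_lip0 _) => x k _.
have lip_n := bdd_lip_if (pred1 n) (lip_f n (ltnSn n)) (bdd_lip0 nat).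
have lip_lt_n := IHn (fun k lt_kn => lip_f k (ltnW lt_kn)).
apply: bdd_lip_ext (bdd_lip_if (fun k => k < n)%N lip_lt_n lip_n).
by move=> x k _ /=; rewrite ltnS; case: ltngtP => // ->.
Qed.

End BoundedLipschitz.

Definition nlft_step (g : C) (k : nat) : 'M[{poly C}]_2 :=
  (nlft_scal g)%:P *: nlft_factor g k.
Definition nlft_prod (gg : nat -> C) (m : nat) := \prod_(0 <= k < m) nlft_step (gg k) k.
Definition nlftA (gg : nat -> C) (m : nat) := nlft_prod gg m 0 0.
Definition nlftB (gg : nat -> C) (m : nat) := nlft_prod gg m 0 1.
Definition nlft_lead (gg : nat -> C) (m : nat) : R := \prod_(0 <= k < m) scal (gg k).

Lemma nlft_prodS (gg : nat -> C) (m : nat) :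
  nlft_prod gg m.+1 = nlft_prod gg m *m nlft_step (gg m) m.
Proof. by rewrite /nlft_prod big_nat_recr. Qed.

Lemma coef_nlftA_S (gg : nat -> C) (m d : nat) :
  (nlftA gg m.+1)`_d =
  (scal (gg m))%:C * (('X^m * nlftA gg m)`_d + - (gg m)^* * (nlftB gg m)`_d).
Proof.
rewrite /nlftA /nlftB nlft_prodS mxE big_ord_recl big_ord1 !mxE /=.
rewrite (_ : lift ord0 ord0 = 1); last exact: val_inj.
set A := nlft_prod _ _ _ _; set B := nlft_prod _ _ _ _; rewrite nlft_scalE.
by rewrite (mulrC A) (mulrC B) -!mulrA -mulrDr coefCM coefD coefCM.
Qed.

Lemma coef_nlftB_S (gg : nat -> C) (m d : nat) :
  (nlftB gg m.+1)`_d =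
  (scal (gg m))%:C * (('X^m * nlftB gg m)`_d + gg m * ('X^(m + m) * nlftA gg m)`_d).
Proof.
rewrite /nlftA /nlftB nlft_prodS mxE big_ord_recl big_ord1 !mxE /=.
rewrite (_ : lift ord0 ord0 = 1); last exact: val_inj.
set A := nlft_prod _ _ _ _; set B := nlft_prod _ _ _ _; rewrite nlft_scalE -mul_polyC addnn.
by rewrite (mulrC A) (mulrC B) -!mulrA -mulrDr addrC coefCM coefD coefCM.
Qed.

Lemma nlft_shiftS (m : nat) : nlft_shift m.+1 = (nlft_shift m + m)%N.
Proof. by rewrite /nlft_shift binS bin1. Qed.

Lemma coefXnM_eq0 (p : {poly C}) (n d : nat) :
  ((n <= d)%N -> p`_(d - n) = 0) -> ('X^n * p)`_d = 0.
Proof. by rewrite coefXnM; case: ltnP => // _ ->. Qed.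

Lemma coefXnM_addn (p : {poly C}) (n d : nat) : ('X^n * p)`_(d + n) = p`_d.
Proof. by rewrite coefXnM ltnNge leq_addl addnK. Qed.

Lemma cabs2_coefXnM_le (p : {poly C}) (n d : nat) (W : R) : 0 <= W ->
  (forall e, cabs2 p`_e <= W) -> cabs2 ('X^n * p)`_d <= W.
Proof. by move=> W_ge0 bp; rewrite coefXnM; case: ifP; rewrite ?cabs20. Qed.

Lemma nlft_support (gg : nat -> C) (m : nat) :
  [/\ forall d, (nlft_shift m < d)%N -> (nlftA gg m)`_d = 0,
      forall d, (d + m.-1 < nlft_shift m)%N -> (nlftA gg m)`_d = 0,
      forall d, (d < nlft_shift m)%N -> (nlftB gg m)`_d = 0 &
      forall d, (nlft_shift m + m <= d)%N -> (nlftB gg m)`_d = 0].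
Proof.
elim: m => [|m [A_hi A_lo B_lo B_hi]].
  rewrite /nlftA /nlftB /nlft_prod big_nil /nlft_shift !mxE /=.
  by split=> -[|d] //= _; rewrite ?coefC ?coef0.
rewrite nlft_shiftS; split=> d bd; rewrite (coef_nlftA_S, coef_nlftB_S).
- rewrite coefXnM_eq0 => [|?]; last by apply: A_hi; lia.
  by rewrite B_hi ?(mulr0, addr0) //; lia.
- rewrite coefXnM_eq0 => [|?]; last by apply: A_lo; lia.
  by rewrite B_lo ?(mulr0, addr0) //; lia.
- rewrite !coefXnM_eq0 ?(mulr0, addr0) // => ?; [apply: A_lo | apply: B_lo]; lia.
- rewrite !coefXnM_eq0 ?(mulr0, addr0) // => ?; [apply: A_hi | apply: B_hi]; lia.
Qed.

Lemma nlft_leadS (gg : nat -> C) (m : nat) :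
  nlft_lead gg m.+1 = nlft_lead gg m * scal (gg m).
Proof. by rewrite /nlft_lead big_nat_recr. Qed.

Lemma nlft_lead_gt0 (gg : nat -> C) (m : nat) : 0 < nlft_lead gg m.
Proof. by rewrite prodr_gt0 // => k _; apply: scal_gt0. Qed.

Lemma nlft_lead_le (gg : nat -> C) (m m' : nat) :
  (m <= m')%N -> nlft_lead gg m' <= nlft_lead gg m.
Proof.
move=> le_mm'; rewrite /nlft_lead (big_cat_nat (leq0n m) le_mm') /=.
have scal_ge0 k : 0 <= scal (gg k) by exact/ltW/scal_gt0.
by rewrite ler_piMr ?prodr_ge0 ?prodr_ile1 // => k _; rewrite scal_ge0 ?scal_le1.
Qed.

Lemma nlftA_lead (gg : nat -> C) (m : nat) :
  (nlftA gg m)`_(nlft_shift m) = (nlft_lead gg m)%:C.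
Proof.
elim: m => [|m IHm].
  by rewrite /nlftA /nlft_prod /nlft_lead !big_nil mxE coefC.
have [_ _ _ B_hi] := nlft_support gg m.
rewrite coef_nlftA_S nlft_shiftS coefXnM_addn IHm B_hi // mulr0 addr0.
by rewrite nlft_leadS rmorphM mulrC.
Qed.

Lemma nlftB_lead (gg : nat -> C) (m : nat) :
  (nlftB gg m.+1)`_(nlft_shift m.+1 + m) = gg m * (nlft_lead gg m.+1)%:C.
Proof.
have [_ _ _ B_hi] := nlft_support gg m.
rewrite coef_nlftB_S nlft_shiftS coefXnM_addn B_hi // add0r -addnA coefXnM_addn.
by rewrite nlftA_lead nlft_leadS rmorphM /=; ring.
Qed.

Lemma coef_nlftA_pred (gg : nat -> C) (m d : nat) :
  (nlftA gg m)`_d = (scal (gg m))%:C *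
    ((nlftA gg m.+1)`_(d + m) + (gg m)^* * (nlftB gg m.+1)`_(d + (m + m))).
Proof.
rewrite coef_nlftA_S coef_nlftB_S !coefXnM_addn addnA !coefXnM_addn.
by rewrite -[LHS]mul1r -(scalC_sqr (gg m)); ring.
Qed.

Lemma coef_nlftB_pred (gg : nat -> C) (m d : nat) :
  (nlftB gg m)`_d = (scal (gg m))%:C *
    ((nlftB gg m.+1)`_(d + m) - gg m * (nlftA gg m.+1)`_d).
Proof.
rewrite coef_nlftA_S coef_nlftB_S coefXnM_addn exprD -mulrA coefXnM_addn.
by rewrite -[LHS]mul1r -(scalC_sqr (gg m)); ring.
Qed.

Lemma nlft_coef_bound (gg : nat -> C) (m d : nat) :
  cabs2 (nlftA gg m)`_d <= 2 ^+ m /\ cabs2 (nlftB gg m)`_d <= 2 ^+ m.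
Proof.
elim: m d => [|m IHm] d.
  rewrite /nlftA /nlftB /nlft_prod big_nil !mxE /= coefC coef0 cabs20.
  by rewrite expr0; case: d => [|d]; rewrite /= ?cabs2R ?expr1n ?expr0n /=; split.
have W_ge0 : 0 <= 2 ^+ m :> R by rewrite exprn_ge0.
have bA e := (IHm e).1; have bB e := (IHm e).2.
have -> : 2 ^+ m.+1 = 2 ^+ m + 2 ^+ m :> R by rewrite exprS; ring.
rewrite coef_nlftA_S coef_nlftB_S; split.
  have cabs2_h : cabs2 (- (gg m)^*) = cabs2 (gg m) by rewrite cabs2N cabs2J.
  by apply: le_trans (cabs2_scal_comb _ _ cabs2_h) _; rewrite lerD ?cabs2_coefXnM_le.
by apply: le_trans (cabs2_scal_comb _ _ (erefl _)) _; rewrite lerD ?cabs2_coefXnM_le.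
Qed.

Section LayerStripping.
Variables (n : nat) (delta : R).
Hypotheses (n_gt0 : (0 < n)%N) (delta_gt0 : 0 < delta).

Definition nlft_good (gg : nat -> C) := delta < nlft_lead gg n.

Definition nlft_data_dist (gg gg' : nat -> C) : R :=
  \sum_(k < n) cabs2 ((nlftA gg n)`_(nlft_shift n - k) - (nlftA gg' n)`_(nlft_shift n - k)) +
  \sum_(k < n) cabs2 ((nlftB gg n)`_(nlft_shift n + k) - (nlftB gg' n)`_(nlft_shift n + k)).

Lemma nlft_data_dist_ge0 (gg gg' : nat -> C) : 0 <= nlft_data_dist gg gg'.
Proof. by rewrite addr_ge0 // sumr_ge0 // => k _; apply: cabs2_ge0. Qed.

Lemma nlft_data_distA (gg gg' : nat -> C) (k : 'I_n) :
  cabs2 ((nlftA gg n)`_(nlft_shift n - k) - (nlftA gg' n)`_(nlft_shift n - k))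
    <= nlft_data_dist gg gg'.
Proof.
rewrite /nlft_data_dist (bigD1 k) //= -addrA lerDl.
by rewrite addr_ge0 ?sumr_ge0 // => j _; apply: cabs2_ge0.
Qed.

Lemma nlft_data_distB (gg gg' : nat -> C) (k : 'I_n) :
  cabs2 ((nlftB gg n)`_(nlft_shift n + k) - (nlftB gg' n)`_(nlft_shift n + k))
    <= nlft_data_dist gg gg'.
Proof.
rewrite /nlft_data_dist [X in _ <= _ + X](bigD1 k) //= addrCA lerDl.
by rewrite addr_ge0 ?sumr_ge0 // => j _; apply: cabs2_ge0.
Qed.

Local Notation bdd_lip := (bdd_lip nlft_good nlft_data_dist).

Lemma bdd_lip_nlft_data :
  bdd_lip (fun gg d => (nlftA gg n)`_d) /\ bdd_lip (fun gg d => (nlftB gg n)`_d).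
Proof.
split; (split; first by exists (2 ^+ n) => gg d _; case: (nlft_coef_bound gg n d)).
- exists 1 => gg gg' d _ _; rewrite mul1r.
  have [A_hi A_lo _ _] := nlft_support gg n; have [A_hi' A_lo' _ _] := nlft_support gg' n.
  case: (ltnP (nlft_shift n) d) => [lt_Ed | le_dE].
    by rewrite A_hi // A_hi' // subrr cabs20 nlft_data_dist_ge0.
  case: (ltnP (d + n.-1) (nlft_shift n)) => [lt_dE | le_Ed].
    by rewrite A_lo // A_lo' // subrr cabs20 nlft_data_dist_ge0.
  have lt_kn : (nlft_shift n - d < n)%N by lia.
  rewrite -(subKn le_dE) -[(nlft_shift n - d)%N]/(nat_of_ord (Ordinal lt_kn)).
  exact: nlft_data_distA.
- exists 1 => gg gg' d _ _; rewrite mul1r.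
  have [_ _ B_lo B_hi] := nlft_support gg n; have [_ _ B_lo' B_hi'] := nlft_support gg' n.
  case: (ltnP d (nlft_shift n)) => [lt_dE | le_Ed].
    by rewrite B_lo // B_lo' // subrr cabs20 nlft_data_dist_ge0.
  case: (leqP (nlft_shift n + n) d) => [le_d | lt_d].
    by rewrite B_hi // B_hi' // subrr cabs20 nlft_data_dist_ge0.
  have lt_kn : (d - nlft_shift n < n)%N by lia.
  rewrite -(subnKC le_Ed) -[(d - nlft_shift n)%N]/(nat_of_ord (Ordinal lt_kn)).
  exact: nlft_data_distB.
Qed.

Section Step.
Variable m : nat.
Hypotheses (lt_mn : (m < n)%N)
  (lipA : bdd_lip (fun gg d => (nlftA gg m.+1)`_d))
  (lipB : bdd_lip (fun gg d => (nlftB gg m.+1)`_d)).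

Lemma bdd_lip_gamma : bdd_lip (fun gg (_ : nat) => gg m).
Proof.
have lip_lead : bdd_lip (fun gg (_ : nat) => (nlft_lead gg m.+1)%:C).
  apply: bdd_lip_ext (bdd_lip_comp (fun _ : nat => nlft_shift m.+1) lipA) => gg _ _.
  exact: nlftA_lead.
have lip_inv : bdd_lip (fun gg (_ : nat) => ((nlft_lead gg m.+1)^-1)%:C).
  apply: bdd_lip_inv delta_gt0 _ lip_lead => gg _ good_gg.
  exact/ltW/(lt_le_trans good_gg)/nlft_lead_le.
have lip_top := bdd_lip_comp (fun _ : nat => (nlft_shift m.+1 + m)%N) lipB.
apply: bdd_lip_ext (bdd_lipM lip_top lip_inv) => gg _ _ /=.
by rewrite nlftB_lead -mulrA -rmorphM mulfV ?mulr1 // gt_eqF ?nlft_lead_gt0.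
Qed.

Lemma bdd_lip_nlft_pred :
  bdd_lip (fun gg d => (nlftA gg m)`_d) /\ bdd_lip (fun gg d => (nlftB gg m)`_d).
Proof.
have lip_g := bdd_lip_gamma; have lip_s := bdd_lip_scal lip_g.
split.
  apply: bdd_lip_ext (bdd_lipM lip_s (bdd_lipD (bdd_lip_comp (addn^~ m) lipA)
    (bdd_lipM (bdd_lipJ lip_g) (bdd_lip_comp (addn^~ (m + m)%N) lipB)))).
  by move=> gg d _; rewrite -coef_nlftA_pred.
apply: bdd_lip_ext (bdd_lipM lip_s (bdd_lipD (bdd_lip_comp (addn^~ m) lipB)
  (bdd_lipN (bdd_lipM lip_g lipA)))).
by move=> gg d _; rewrite -coef_nlftB_pred.
Qed.

End Step.

Lemma bdd_lip_nlft_coef (m : nat) : (m <= n)%N ->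
  bdd_lip (fun gg d => (nlftA gg m)`_d) /\ bdd_lip (fun gg d => (nlftB gg m)`_d).
Proof.
move=> le_mn; rewrite -(subKn le_mn); elim: (n - m)%N (leq_subr m n) => [|j IHj] le_jn.
  by rewrite subn0; apply: bdd_lip_nlft_data.
have lt_jn : (n - j.+1 < n)%N by lia.
have [] := IHj (ltnW le_jn); rewrite (_ : (n - j = (n - j.+1).+1)%N); last by lia.
exact: bdd_lip_nlft_pred.
Qed.

Lemma bdd_lip_nlft_inverse : bdd_lip (fun gg k => if (k < n)%N then gg k else 0).
Proof.
apply: (@bdd_lip_finite _ _ _ nlft_data_dist_ge0 (fun gg k => gg k)) => k lt_kn.
by have [lipA lipB] := bdd_lip_nlft_coef lt_kn; apply: bdd_lip_gamma.
Qed.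

End LayerStripping.

Definition extend (n : nat) (gam : 'I_n -> C) (k : nat) : C :=
  if insub k is Some i then gam i else 0.

Lemma extendE (n : nat) (gam : 'I_n -> C) (i : 'I_n) : extend gam i = gam i.
Proof. by rewrite /extend valK. Qed.

Lemma nlft_polymx_extend (n : nat) (gam : 'I_n -> C) :
  nlft_polymx gam = nlft_prod (extend gam) n.
Proof. by rewrite /nlft_polymx /nlft_prod big_mkord; apply: eq_bigr => i _; rewrite extendE. Qed.

Lemma nlft_a_extend (n : nat) (gam : 'I_n -> C) (k : 'I_n) :
  nlft_a gam k = (nlftA (extend gam) n)`_(nlft_shift n - k).
Proof. by rewrite /nlft_a nlft_polymx_extend. Qed.

Lemma nlft_b_extend (n : nat) (gam : 'I_n -> C) (k : 'I_n) :
  nlft_b gam k = (nlftB (extend gam) n)`_(nlft_shift n + k).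
Proof. by rewrite /nlft_b nlft_polymx_extend. Qed.

Lemma nlft_good_extend (n : nat) (delta : R) (gam : 'I_n -> C) (Hn : (0 < n)%N) :
  delta%:C < nlft_a gam (Ordinal Hn) -> nlft_good n delta (extend gam).
Proof. by rewrite nlft_a_extend subn0 nlftA_lead ltcR. Qed.

Lemma dist_Cn2_nlft (n : nat) (gam gam' : 'I_n -> C) :
  dist_Cn2 (nlft_a gam) (nlft_b gam) (nlft_a gam') (nlft_b gam') =
  Num.sqrt (nlft_data_dist n (extend gam) (extend gam')).
Proof.
rewrite /dist_Cn2 /nlft_data_dist.
by congr (Num.sqrt (_ + _)); apply: eq_bigr => k _; rewrite ?nlft_a_extend ?nlft_b_extend.
Qed.

Lemma dist_Cn_le (n : nat) (gam gam' : 'I_n -> C) (K D : R) : 0 <= D ->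
  (forall k, cabs2 (gam k - gam' k) <= K * D) ->
  dist_Cn gam gam' <= Num.sqrt (n%:R * `|K|) * Num.sqrt D.
Proof.
move=> D_ge0 le_KD; rewrite /dist_Cn -sqrtrM ?mulr_ge0 // ler_sqrt ?mulr_ge0 //.
apply: le_trans (_ : \sum_(k < n) `|K| * D <= _).
  by apply: ler_sum => k _; apply: le_trans (le_KD k) _; rewrite ler_wpM2r ?ler_norm.
by rewrite sumr_const card_ord -mulrA mulr_natl.
Qed.

End NLFTLipschitz.

Unset Implicit Arguments.

Theorem corollary6p3 (R : realType) (n : nat) (delta : R) :
  (2 <= n)%N -> 0 < delta ->
  exists L : R,
    forall (Hn : (0 < n)%N) (gam gam' : 'I_n -> R[i]),
      delta%:C < nlft_a gam (Ordinal Hn) ->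
      delta%:C < nlft_a gam' (Ordinal Hn) ->
      dist_Cn gam gam' <=
        L * dist_Cn2 (nlft_a gam) (nlft_b gam) (nlft_a gam') (nlft_b gam').
Proof.
move=> le2n delta_gt0; have n_gt0 : (0 < n)%N by apply: leq_trans le2n.
have [_ [K lipK]] := bdd_lip_nlft_inverse n_gt0 delta_gt0.
exists (Num.sqrt (n%:R * `|K|)) => Hn gam gam' a0_gt a0_gt'.
rewrite dist_Cn2_nlft; apply: dist_Cn_le => [|k]; first exact: nlft_data_dist_ge0.
have := lipK _ _ k (nlft_good_extend a0_gt) (nlft_good_extend a0_gt').
by rewrite ltn_ord !extendE.
Qed.
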